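(* There exist unital endomorphisms of $C^1[0,1]$ which are Riesz operators but are not power compact. For example, the endomorphism $f\mapsto f\circ\phi$ with $\phi(x)=x^2/2$ is such an endomorphism.
   Context: $C^1[0,1]$ is the Banach algebra of continuously differentiable functions on $[0,1]$ with norm $\|f\|_\infty+\|f'\|_\infty$. A bounded operator $T$ is a Riesz operator if $\lim_{n}\left[\inf\{\|T^n-K\|:K \text{ compact}\}\right]^{1/n}=0$; it is power compact if $T^N$ is compact for some positive integer $N$. *)

From Stdlib Require Import Reals.
Open Scope R_scope.

(* Elements of C^1[0,1] are represented by functions R -> R; only their
   values on [0,1] matter. *)
Definition I01 (x : R) : Prop := 0 <= x <= 1.

Definition eq01 (f g : R -> R) : Prop := forall x, I01 x -> f x = g x.

Definition is_deriv01 (f f' : R -> R) : Prop :=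
  forall x, I01 x -> forall eps, 0 < eps -> exists delta, 0 < delta /\
    forall y, I01 y -> Rabs (y - x) < delta ->
      Rabs (f y - f x - f' x * (y - x)) <= eps * Rabs (y - x).

Definition cont01 (g : R -> R) : Prop :=
  forall x, I01 x -> forall eps, 0 < eps -> exists delta, 0 < delta /\
    forall y, I01 y -> Rabs (y - x) < delta -> Rabs (g y - g x) < eps.

Definition C1 (f : R -> R) : Prop := exists f', is_deriv01 f f' /\ cont01 f'.

(* ||f||_inf + ||f'||_inf <= c  (the derivative on [0,1] is unique) *)
Definition C1norm_le (f : R -> R) (c : R) : Prop :=
  exists f', is_deriv01 f f' /\
    forall x y, I01 x -> I01 y -> Rabs (f x) + Rabs (f' y) <= c.

(* (Linear) operators on C^1[0,1], represented as maps on representatives. *)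
Definition Op := (R -> R) -> (R -> R).

Definition is_op (A : Op) : Prop :=
  (forall f, C1 f -> C1 (A f)) /\
  (forall f g, C1 f -> C1 g -> eq01 f g -> eq01 (A f) (A g)) /\
  (forall f g a, C1 f -> C1 g ->
     eq01 (A (fun x => a * f x + g x)) (fun x => a * A f x + A g x)).

Definition op_norm_le (A : Op) (c : R) : Prop :=
  0 <= c /\ forall f r, C1 f -> C1norm_le f r -> C1norm_le (A f) (c * r).

Definition bounded_op (A : Op) : Prop := is_op A /\ exists c, op_norm_le A c.

Definition op_pow (A : Op) (n : nat) : Op := fun f => Nat.iter n A f.

Definition op_sub (A B : Op) : Op := fun f x => A f x - B f x.

(* compact operator: the image of the closed unit ball is relatively compact,
   i.e. every image of a sequence in the unit ball has a subsequence converging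
   in C^1[0,1]. *)
Definition compact_op (A : Op) : Prop :=
  bounded_op A /\
  forall u : nat -> R -> R, (forall n, C1 (u n) /\ C1norm_le (u n) 1) ->
    exists (phi : nat -> nat) (g : R -> R),
      (forall n, (phi n < phi (S n))%nat) /\ C1 g /\
      forall eps, 0 < eps -> exists N, forall n, (N <= n)%nat ->
        C1norm_le (fun x => A (u (phi n)) x - g x) eps.

(* Riesz operator: lim_n (inf_{K compact} ||T^n - K||)^(1/n) = 0, unfolded:
   for every eps > 0, for all large n, inf_K ||T^n - K|| < eps^n. *)
Definition riesz_op (T : Op) : Prop :=
  bounded_op T /\
  forall eps, 0 < eps -> exists N, forall n, (N <= n)%nat ->
    exists K c, compact_op K /\ c < eps ^ n /\ op_norm_le (op_sub (op_pow T n) K) c.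

Definition power_compact (T : Op) : Prop :=
  exists N, (1 <= N)%nat /\ compact_op (op_pow T N).

Definition unital_endo (T : Op) : Prop :=
  bounded_op T /\
  (forall f g, C1 f -> C1 g ->
     eq01 (T (fun x => f x * g x)) (fun x => T f x * T g x)) /\
  eq01 (T (fun _ => 1)) (fun _ => 1).

Definition comp_op (phi : R -> R) : Op := fun f x => f (phi x).

(* With ph(x) = x^2/2, the n-th power of T f = f o ph is composition with
   ph_n(x) = 2 (x/2)^(2^n).  On [0,1], ph_n and ph_n' are bounded by 2^(1-2^n) and
   2^n 2^(1-2^n), so by the mean value inequality T^n lies within (1 + 2^n) 2^(1-2^n)
   of the rank-one operator f |-> f(0); this beats every eps^n, hence T is Riesz.
   T^N is not compact: ph_N maps [0,1] increasingly onto [0,a], and carries the bumps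
   u_k(y) = (y-a) / (2 (1 + k^2 (y-a)^2)) of the unit ball to functions whose derivatives
   equal ph_N'(1)/2 at 1 but tend to 0 at every y < 1.  The derivative of a C^1 limit of a
   subsequence would be the uniform limit of these derivatives, which jumps at 1. *)

From Stdlib Require Import Reals Lra Lia IndefiniteDescription FunctionalExtensionality.
From Coquelicot Require Import Coquelicot.
Open Scope R_scope.

Lemma I01_0 : I01 0.
Proof. unfold I01; lra. Qed.

Lemma I01_1 : I01 1.
Proof. unfold I01; lra. Qed.

Lemma is_deriv01_unique f f1 f2 :
  is_deriv01 f f1 -> is_deriv01 f f2 -> forall x, I01 x -> f1 x = f2 x.
Proof.
  intros H1 H2 x Hx.
  destruct (Req_dec (f1 x) (f2 x)) as [E|E]; [exact E|exfalso].
  set (d := Rabs (f1 x - f2 x)).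
  assert (Hd : 0 < d) by (apply Rabs_pos_lt; lra).
  destruct (H1 x Hx (d / 4)) as [d1 [Hd1 P1]]; [lra|].
  destruct (H2 x Hx (d / 4)) as [d2 [Hd2 P2]]; [lra|].
  set (h := Rmin (Rmin d1 d2) (1 / 2) / 2).
  assert (Hh : 0 < h /\ h < d1 /\ h < d2 /\ h <= 1 / 4).
  { unfold h, Rmin; repeat destruct Rle_dec; lra. }
  set (y := if Rle_dec x (1 / 2) then x + h else x - h).
  assert (Hy : I01 y /\ Rabs (y - x) = h).
  { unfold I01 in Hx; unfold y, I01; destruct Rle_dec.
    - replace (x + h - x) with h by ring. rewrite Rabs_pos_eq; lra.
    - replace (x - h - x) with (- h) by ring. rewrite Rabs_Ropp, Rabs_pos_eq; lra. }
  destruct Hy as [Hy Hyx].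
  specialize (P1 y Hy ltac:(lra)). specialize (P2 y Hy ltac:(lra)).
  rewrite Hyx in P1, P2.
  assert (Hdiff : Rabs ((f1 x - f2 x) * (y - x)) <= d / 2 * h).
  { replace ((f1 x - f2 x) * (y - x)) with
      (- (f y - f x - f1 x * (y - x)) + (f y - f x - f2 x * (y - x))) by ring.
    eapply Rle_trans; [apply Rabs_triang|]. rewrite Rabs_Ropp. lra. }
  rewrite Rabs_mult, Hyx in Hdiff. fold d in Hdiff. nra.
Qed.

Lemma is_deriv01_const c : is_deriv01 (fun _ => c) (fun _ => 0).
Proof.
  intros x _ eps Heps. exists 1. split; [lra|]. intros y _ _.
  replace (c - c - 0 * (y - x)) with 0 by ring. rewrite Rabs_R0.
  apply Rmult_le_pos; [lra|apply Rabs_pos].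
Qed.

Lemma is_deriv01_sub f g f' g' : is_deriv01 f f' -> is_deriv01 g g' ->
  is_deriv01 (fun x => f x - g x) (fun x => f' x - g' x).
Proof.
  intros Hf Hg x Hx eps Heps.
  destruct (Hf x Hx (eps / 2)) as [d1 [Hd1 P1]]; [lra|].
  destruct (Hg x Hx (eps / 2)) as [d2 [Hd2 P2]]; [lra|].
  exists (Rmin d1 d2). split; [apply Rmin_pos; assumption|].
  intros y Hy Hyx.
  specialize (P1 y Hy (Rlt_le_trans _ _ _ Hyx (Rmin_l _ _))).
  specialize (P2 y Hy (Rlt_le_trans _ _ _ Hyx (Rmin_r _ _))).
  replace (f y - g y - (f x - g x) - (f' x - g' x) * (y - x)) with
    ((f y - f x - f' x * (y - x)) - (g y - g x - g' x * (y - x))) by ring.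
  eapply Rle_trans; [apply Rabs_triang|]. rewrite Rabs_Ropp. lra.
Qed.

Lemma is_deriv01_of_is_derive f f' :
  (forall x, is_derive f x (f' x)) -> is_deriv01 f f'.
Proof.
  intros H x _ eps Heps.
  destruct (proj1 (is_derive_Reals f x (f' x)) (H x) eps Heps) as [d Hd].
  exists d. split; [apply cond_pos|]. intros y _ Hyx.
  destruct (Req_dec y x) as [->|Hne].
  { replace (f x - f x - f' x * (x - x)) with 0 by ring. rewrite Rabs_R0.
    apply Rmult_le_pos; [lra|apply Rabs_pos]. }
  specialize (Hd (y - x) ltac:(lra) Hyx). replace (x + (y - x)) with y in Hd by ring.
  assert (0 < Rabs (y - x)) by (apply Rabs_pos_lt; lra).
  replace (f y - f x - f' x * (y - x)) with
    (((f y - f x) / (y - x) - f' x) * (y - x)) by (field; lra).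
  rewrite Rabs_mult. nra.
Qed.

Lemma is_deriv01_lipschitz_at f f' x : is_deriv01 f f' -> I01 x ->
  exists delta, 0 < delta /\ forall y, I01 y -> Rabs (y - x) < delta ->
    Rabs (f y - f x) <= (Rabs (f' x) + 1) * Rabs (y - x).
Proof.
  intros Hf Hx. destruct (Hf x Hx 1 Rlt_0_1) as [d [Hd Pd]].
  exists d. split; [exact Hd|]. intros y Hy Hyx. specialize (Pd y Hy Hyx).
  replace (f y - f x) with ((f y - f x - f' x * (y - x)) + f' x * (y - x)) by ring.
  eapply Rle_trans; [apply Rabs_triang|]. rewrite Rabs_mult. lra.
Qed.

Lemma is_deriv01_cont01 f f' : is_deriv01 f f' -> cont01 f.
Proof.
  intros Hf x Hx eps Heps.
  destruct (is_deriv01_lipschitz_at f f' x Hf Hx) as [d [Hd L]].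
  set (B := Rabs (f' x) + 1).
  assert (HB : 0 < B) by (pose proof (Rabs_pos (f' x)); unfold B; lra).
  exists (Rmin d (eps / B)). split; [apply Rmin_pos; [exact Hd|apply Rdiv_lt_0_compat; lra]|].
  intros y Hy Hyx.
  specialize (L y Hy (Rlt_le_trans _ _ _ Hyx (Rmin_l _ _))). fold B in L.
  assert (Hyx' := Rlt_le_trans _ _ _ Hyx (Rmin_r _ _)).
  apply (Rmult_lt_compat_l B) in Hyx'; [|exact HB].
  replace (B * (eps / B)) with eps in Hyx' by (field; lra). lra.
Qed.

Lemma is_deriv01_comp f f' g g' :
  (forall x, I01 x -> I01 (g x)) -> is_deriv01 f f' -> is_deriv01 g g' ->
  is_deriv01 (fun x => f (g x)) (fun x => f' (g x) * g' x).
Proof.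
  intros Hg01 Hf Hg x Hx eps Heps.
  set (A := Rabs (f' (g x))). set (B := Rabs (g' x) + 1).
  assert (HA : 0 <= A) by apply Rabs_pos.
  assert (HB : 0 < B) by (pose proof (Rabs_pos (g' x)); unfold B; lra).
  destruct (is_deriv01_lipschitz_at g g' x Hg Hx) as [d1 [Hd1 L]].
  destruct (Hf (g x) (Hg01 x Hx) (eps / (2 * B))) as [d2 [Hd2 Pf]].
  { apply Rdiv_lt_0_compat; lra. }
  destruct (Hg x Hx (eps / (2 * (A + 1)))) as [d3 [Hd3 Pg]].
  { apply Rdiv_lt_0_compat; lra. }
  exists (Rmin d1 (Rmin (d2 / B) d3)). split.
  { repeat apply Rmin_pos; try apply Rdiv_lt_0_compat; lra. }
  intros y Hy Hyx.
  assert (Hy23 := Rlt_le_trans _ _ _ Hyx (Rmin_r _ _)).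
  specialize (L y Hy (Rlt_le_trans _ _ _ Hyx (Rmin_l _ _))). fold B in L.
  specialize (Pg y Hy (Rlt_le_trans _ _ _ Hy23 (Rmin_r _ _))).
  assert (Hgy : Rabs (g y - g x) < d2).
  { assert (Hy2 := Rlt_le_trans _ _ _ Hy23 (Rmin_l _ _)).
    apply (Rmult_lt_compat_l B) in Hy2; [|exact HB].
    replace (B * (d2 / B)) with d2 in Hy2 by (field; lra). lra. }
  specialize (Pf (g y) (Hg01 y Hy) Hgy).
  assert (Hf_part : eps / (2 * B) * Rabs (g y - g x) <= eps / 2 * Rabs (y - x)).
  { replace (eps / 2 * Rabs (y - x)) with (eps / (2 * B) * (B * Rabs (y - x))) by (field; lra).
    apply Rmult_le_compat_l; [apply Rlt_le, Rdiv_lt_0_compat; lra|exact L]. }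
  assert (Hg_part : A * (eps / (2 * (A + 1))) <= eps / 2).
  { replace (A * (eps / (2 * (A + 1)))) with (eps / 2 * (A / (A + 1))) by (field; lra).
    assert (Hq : A / (A + 1) <= 1).
    { apply (Rmult_le_reg_r (A + 1)); [lra|].
      unfold Rdiv. rewrite Rmult_assoc, Rinv_l by lra. lra. }
    rewrite <- (Rmult_1_r (eps / 2)) at 2. apply Rmult_le_compat_l; lra. }
  replace (f (g y) - f (g x) - f' (g x) * g' x * (y - x)) with
    ((f (g y) - f (g x) - f' (g x) * (g y - g x))
     + f' (g x) * (g y - g x - g' x * (y - x))) by ring.
  eapply Rle_trans; [apply Rabs_triang|]. rewrite Rabs_mult. fold A.
  pose proof (Rabs_pos (y - x)). nra.
Qed.

(* Composing with [clamp] extends functions on [0,1] to R, so that the continuity and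
   mean value theorems of the standard library apply. *)
Definition clamp (x : R) : R := Rmax 0 (Rmin 1 x).

Lemma clamp_I01 x : I01 (clamp x).
Proof. unfold clamp, I01, Rmax, Rmin; repeat destruct Rle_dec; lra. Qed.

Lemma clamp_id x : I01 x -> clamp x = x.
Proof. unfold clamp, I01, Rmax, Rmin; repeat destruct Rle_dec; lra. Qed.

Lemma clamp_lipschitz x y : Rabs (clamp y - clamp x) <= Rabs (y - x).
Proof.
  unfold clamp, Rmax, Rmin; repeat destruct Rle_dec; unfold Rabs;
    repeat destruct Rcase_abs; lra.
Qed.

Lemma cont01_continuity_pt_clamp g :
  cont01 g -> forall z, continuity_pt (fun z => g (clamp z)) z.
Proof.
  intros Hg z. unfold continuity_pt, continue_in, limit1_in, limit_in; simpl; unfold R_dist.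
  intros eps Heps. destruct (Hg (clamp z) (clamp_I01 z) eps Heps) as [d [Hd Pd]].
  exists d. split; [exact Hd|]. intros w [_ Hw].
  apply Pd; [apply clamp_I01|]. eapply Rle_lt_trans; [apply clamp_lipschitz|exact Hw].
Qed.

Lemma cont01_of_continuity_pt_clamp g :
  (forall z, continuity_pt (fun z => g (clamp z)) z) -> cont01 g.
Proof.
  intros Hg x Hx eps Heps. specialize (Hg x).
  unfold continuity_pt, continue_in, limit1_in, limit_in in Hg; simpl in Hg; unfold R_dist in Hg.
  destruct (Hg eps Heps) as [d [Hd Pd]]. exists d. split; [exact Hd|].
  intros y Hy Hyx. destruct (Req_dec y x) as [->|Hne].
  { replace (g x - g x) with 0 by ring. rewrite Rabs_R0. exact Heps. }
  rewrite <- (clamp_id y Hy), <- (clamp_id x Hx).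
  apply Pd. split; [split; [exact I|auto]|exact Hyx].
Qed.

Lemma cont01_of_continuity_pt g : (forall x, continuity_pt g x) -> cont01 g.
Proof.
  intros Hg. apply cont01_of_continuity_pt_clamp. intros z.
  apply (continuity_pt_comp clamp g z); [|apply Hg].
  unfold continuity_pt, continue_in, limit1_in, limit_in; simpl; unfold R_dist.
  intros eps Heps. exists eps. split; [exact Heps|]. intros w [_ Hw].
  eapply Rle_lt_trans; [apply clamp_lipschitz|exact Hw].
Qed.

Lemma cont01_comp_mult f g h : (forall x, I01 x -> I01 (g x)) ->
  cont01 f -> cont01 g -> cont01 h -> cont01 (fun x => f (g x) * h x).
Proof.
  intros Hg01 Hf Hg Hh. apply cont01_of_continuity_pt_clamp. intros z.
  apply (continuity_pt_ext (mult_fct (comp (fun w => f (clamp w)) (fun z => g (clamp z)))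
                                     (fun z => h (clamp z)))).
  { intros w. unfold mult_fct, comp. rewrite clamp_id by apply Hg01, clamp_I01. reflexivity. }
  apply continuity_pt_mult; [apply continuity_pt_comp|];
    apply cont01_continuity_pt_clamp; assumption.
Qed.

Lemma is_deriv01_interior f f' z : is_deriv01 f f' -> 0 < z < 1 ->
  is_derive (fun x => f (clamp x)) z (f' z).
Proof.
  intros Hf Hz. apply is_derive_Reals. intros eps Heps.
  assert (Hz01 : I01 z) by (unfold I01; lra).
  destruct (Hf z Hz01 (eps / 2)) as [d [Hd Pd]]; [lra|].
  assert (Hpos : 0 < Rmin d (Rmin z (1 - z))) by (repeat apply Rmin_pos; lra).
  exists (mkposreal _ Hpos). intros h Hh0 Hh. simpl in Hh.
  assert (Hhz : Rabs h < Rmin z (1 - z)) by (eapply Rlt_le_trans; [exact Hh|apply Rmin_r]).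
  assert (Hzh : I01 (z + h)).
  { unfold I01. revert Hhz. unfold Rmin, Rabs; destruct Rle_dec; destruct Rcase_abs; lra. }
  rewrite !clamp_id by assumption.
  specialize (Pd (z + h) Hzh). replace (z + h - z) with h in Pd by ring.
  specialize (Pd (Rlt_le_trans _ _ _ Hh (Rmin_l _ _))).
  assert (Hh' : 0 < Rabs h) by (apply Rabs_pos_lt; exact Hh0).
  replace ((f (z + h) - f z) / h - f' z) with ((f (z + h) - f z - f' z * h) / h)
    by (field; exact Hh0).
  unfold Rdiv. rewrite Rabs_mult, Rabs_inv.
  apply (Rmult_le_compat_r (/ Rabs h)) in Pd; [|apply Rlt_le, Rinv_0_lt_compat; exact Hh'].
  replace (eps / 2 * Rabs h * / Rabs h) with (eps / 2) in Pd by (field; lra). lra.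
Qed.

Lemma is_deriv01_lipschitz f f' M : is_deriv01 f f' -> (forall z, I01 z -> Rabs (f' z) <= M) ->
  forall x y, I01 x -> I01 y -> Rabs (f y - f x) <= M * Rabs (y - x).
Proof.
  intros Hf HM x y Hx Hy.
  assert (Hbounds : 0 <= Rmin x y /\ Rmax x y <= 1).
  { unfold I01 in *. split; [apply Rmin_glb|apply Rmax_lub]; lra. }
  destruct (MVT_gen (fun z => f (clamp z)) x y f') as [c [Hc Ec]].
  - intros z Hz. apply (is_deriv01_interior f f' z Hf). lra.
  - intros z _. apply cont01_continuity_pt_clamp, (is_deriv01_cont01 f f' Hf).
  - rewrite !clamp_id in Ec by assumption. rewrite Ec, Rabs_mult.
    apply Rmult_le_compat_r; [apply Rabs_pos|]. apply HM. unfold I01. lra.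
Qed.

Lemma C1norm_le_intro f f' a b : is_deriv01 f f' ->
  (forall x, I01 x -> Rabs (f x) <= a) -> (forall y, I01 y -> Rabs (f' y) <= b) ->
  C1norm_le f (a + b).
Proof.
  intros Hf Ha Hb. exists f'. split; [exact Hf|].
  intros x y Hx Hy. specialize (Ha x Hx). specialize (Hb y Hy). lra.
Qed.

Lemma C1norm_le_bounds f r : C1norm_le f r -> exists f', is_deriv01 f f' /\
  (forall x, I01 x -> Rabs (f x) <= r) /\ (forall y, I01 y -> Rabs (f' y) <= r).
Proof.
  intros [f' [Hf Hb]]. exists f'. split; [exact Hf|]. split.
  - intros x Hx. specialize (Hb x x Hx Hx). pose proof (Rabs_pos (f' x)). lra.
  - intros y Hy. specialize (Hb y y Hy Hy). pose proof (Rabs_pos (f y)). lra.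
Qed.

Lemma C1norm_le_deriv f f' r : is_deriv01 f f' -> C1norm_le f r ->
  forall y, I01 y -> Rabs (f' y) <= r.
Proof.
  intros Hf Hr y Hy. destruct (C1norm_le_bounds f r Hr) as [f'' [Hf'' [_ Hb]]].
  rewrite (is_deriv01_unique f f' f'' Hf Hf'' y Hy). exact (Hb y Hy).
Qed.

Lemma C1_const c : C1 (fun _ => c).
Proof.
  exists (fun _ => 0). split; [apply is_deriv01_const|].
  apply cont01_of_continuity_pt. intros x. apply continuity_pt_const. intros ? ?; reflexivity.
Qed.

Definition eval0 : Op := fun f _ => f 0.

Section CompositionOperator.

Variables phi dphi : R -> R.
Hypothesis phi_I01 : forall x, I01 x -> I01 (phi x).
Hypothesis phi_deriv : is_deriv01 phi dphi.

Lemma comp_op_deriv f f' : is_deriv01 f f' ->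
  is_deriv01 (comp_op phi f) (fun x => f' (phi x) * dphi x).
Proof. intros Hf. exact (is_deriv01_comp f f' phi dphi phi_I01 Hf phi_deriv). Qed.

Lemma is_op_comp_op : cont01 dphi -> is_op (comp_op phi).
Proof.
  intros Hdphi. split; [|split].
  - intros f [f' [Hf Hf']]. exists (fun x => f' (phi x) * dphi x).
    split; [apply comp_op_deriv, Hf|].
    apply cont01_comp_mult;
      [exact phi_I01|exact Hf'|apply (is_deriv01_cont01 _ _ phi_deriv)|exact Hdphi].
  - intros f g _ _ Efg x Hx. apply Efg, phi_I01, Hx.
  - intros f g a _ _ x _. reflexivity.
Qed.

Lemma comp_op_norm_le : (forall x, I01 x -> Rabs (dphi x) <= 1) -> op_norm_le (comp_op phi) 1.
Proof.
  intros Hdphi. split; [lra|]. intros f r _ [f' [Hf Hb]].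
  exists (fun x => f' (phi x) * dphi x). split; [apply comp_op_deriv, Hf|].
  intros x y Hx Hy. unfold comp_op.
  specialize (Hb (phi x) (phi y) (phi_I01 x Hx) (phi_I01 y Hy)).
  specialize (Hdphi y Hy). rewrite Rabs_mult.
  pose proof (Rabs_pos (f' (phi y))). nra.
Qed.

Lemma unital_endo_comp_op : cont01 dphi -> (forall x, I01 x -> Rabs (dphi x) <= 1) ->
  unital_endo (comp_op phi).
Proof.
  intros Hcont Hle.
  split; [split; [apply is_op_comp_op, Hcont|exists 1; apply comp_op_norm_le, Hle]|split].
  - intros f g _ _ x _. reflexivity.
  - intros x _. reflexivity.
Qed.

Lemma comp_op_sub_eval0_norm_le a b :
  (forall x, I01 x -> Rabs (phi x) <= a) -> (forall x, I01 x -> Rabs (dphi x) <= b) ->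
  op_norm_le (op_sub (comp_op phi) eval0) (a + b).
Proof.
  intros Ha Hb.
  assert (Ha0 := Rle_trans _ _ _ (Rabs_pos _) (Ha 0 I01_0)).
  assert (Hb0 := Rle_trans _ _ _ (Rabs_pos _) (Hb 0 I01_0)).
  split; [lra|]. intros f r _ Hr.
  destruct (C1norm_le_bounds f r Hr) as [f' [Hf [_ Hf']]].
  assert (Hr0 := Rle_trans _ _ _ (Rabs_pos _) (Hf' 0 I01_0)).
  replace ((a + b) * r) with (r * a + r * b) by ring.
  apply (C1norm_le_intro _ (fun x => f' (phi x) * dphi x - 0)).
  - apply is_deriv01_sub; [apply comp_op_deriv, Hf|apply is_deriv01_const].
  - intros x Hx. unfold op_sub, comp_op, eval0.
    pose proof (is_deriv01_lipschitz f f' r Hf Hf' 0 (phi x) I01_0 (phi_I01 x Hx)) as L.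
    rewrite Rminus_0_r in L.
    eapply Rle_trans; [exact L|]. apply Rmult_le_compat_l; [exact Hr0|apply Ha, Hx].
  - intros y Hy. rewrite Rminus_0_r, Rabs_mult.
    apply Rmult_le_compat; try apply Rabs_pos; [apply Hf', phi_I01, Hy|apply Hb, Hy].
Qed.

End CompositionOperator.

Lemma op_pow_comp_op phi n : op_pow (comp_op phi) n = comp_op (Nat.iter n phi).
Proof.
  induction n as [|n IH]; [reflexivity|].
  apply functional_extensionality. intros f. apply functional_extensionality. intros x.
  change (op_pow (comp_op phi) n f (phi x) = f (Nat.iter (S n) phi x)).
  rewrite IH, Nat.iter_succ_r. reflexivity.
Qed.

Lemma strictly_increasing_ge_id (sigma : nat -> nat) :
  (forall n, (sigma n < sigma (S n))%nat) -> forall n, (n <= sigma n)%nat.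
Proof. intros H n. induction n as [|n IH]; [lia|]. specialize (H n). lia. Qed.

Lemma Un_cv_subseq u l (sigma : nat -> nat) :
  (forall n, (sigma n < sigma (S n))%nat) -> Un_cv u l -> Un_cv (fun n => u (sigma n)) l.
Proof.
  intros Hsigma Hu eps Heps. destruct (Hu eps Heps) as [N HN]. exists N. intros n Hn.
  apply HN. pose proof (strictly_increasing_ge_id sigma Hsigma n). lia.
Qed.

Lemma bounded_seq_cv_subseq (u : nat -> R) M : (forall n, Rabs (u n) <= M) ->
  exists (sigma : nat -> nat) l, (forall n, (sigma n < sigma (S n))%nat) /\
    Un_cv (fun n => u (sigma n)) l.
Proof.
  intros Hu.
  destruct (Bolzano_Weierstrass u (fun c => - M <= c <= M) (compact_P3 (- M) M))
    as [l Hl].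
  { intros n. apply Rabs_le_between, Hu. }
  assert (Hnear : forall N, exists p, (N <= p)%nat /\ Rabs (u p - l) < / (INR N + 1)).
  { intros N.
    assert (HN : 0 < / (INR N + 1)) by (apply Rinv_0_lt_compat; pose proof (pos_INR N); lra).
    apply (Hl (fun y => Rabs (y - l) < / (INR N + 1)) N).
    exists (mkposreal _ HN). intros y Hy. exact Hy. }
  set (next N := proj1_sig (constructive_indefinite_description _ (Hnear N))).
  assert (Hnext : forall N, (N <= next N)%nat /\ Rabs (u (next N) - l) < / (INR N + 1)).
  { intros N. exact (proj2_sig (constructive_indefinite_description _ (Hnear N))). }
  set (sigma := fix sigma n := match n with O => next O | S m => next (S (sigma m)) end).
  assert (Hsigma : forall n, (sigma n < sigma (S n))%nat)
    by (intros n; apply (Hnext (S (sigma n)))).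
  exists sigma, l. split; [exact Hsigma|].
  intros eps Heps. destruct (archimed_cor1 eps Heps) as [N [HN HN0]].
  exists N. intros n Hn. unfold R_dist.
  assert (Hm : exists m, (n <= m)%nat /\ sigma n = next m).
  { destruct n as [|n]; [exists O; split; [lia|reflexivity]|].
    exists (S (sigma n)).
    split; [pose proof (strictly_increasing_ge_id sigma Hsigma n); lia|reflexivity]. }
  destruct Hm as [m [Hnm ->]].
  eapply Rlt_trans; [apply Hnext|]. eapply Rle_lt_trans; [|exact HN].
  apply Rinv_le_contravar; [apply lt_0_INR; exact HN0|].
  apply le_INR in Hn. apply le_INR in Hnm. lra.
Qed.

Lemma compact_op_eval0 : compact_op eval0.
Proof.
  split; [split; [split; [|split]|exists 1; split]|].
  - intros f _. apply C1_const.
  - intros f g _ _ Efg x _. apply Efg, I01_0.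
  - intros f g a _ _ x _. reflexivity.
  - lra.
  - intros f r _ Hr. destruct (C1norm_le_bounds f r Hr) as [f' [_ [Hf _]]].
    replace (1 * r) with (r + 0) by ring.
    apply (C1norm_le_intro _ (fun _ => 0)); [apply is_deriv01_const| |].
    + intros x _. apply Hf, I01_0.
    + intros y _. rewrite Rabs_R0. lra.
  - intros u Hu.
    destruct (bounded_seq_cv_subseq (fun n => u n 0) 1) as [sigma [l [Hsigma Hl]]].
    { intros n. destruct (C1norm_le_bounds _ _ (proj2 (Hu n))) as [_ [_ [Hb _]]].
      apply Hb, I01_0. }
    exists sigma, (fun _ => l). split; [exact Hsigma|]. split; [apply C1_const|].
    intros eps Heps. destruct (Hl eps Heps) as [N HN]. exists N. intros n Hn.
    replace eps with (eps + 0) by ring.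
    apply (C1norm_le_intro _ (fun _ => 0)); [exact (is_deriv01_const (u (sigma n) 0 - l))| |].
    + intros x _. apply Rlt_le, HN, Hn.
    + intros y _. rewrite Rabs_R0. lra.
Qed.

Definition ph (x : R) : R := x ^ 2 / 2.

Definition half_pow (k : nat) (x : R) : R := 2 * (x / 2) ^ k.

Lemma iter_ph n : Nat.iter n ph = half_pow (2 ^ n).
Proof.
  apply functional_extensionality. intros x.
  induction n as [|n IH]; [unfold half_pow; simpl; field|].
  rewrite Nat.iter_succ, IH. unfold ph, half_pow.
  rewrite Nat.pow_succ_r', Nat.mul_comm, pow_mult. field.
Qed.

Lemma pow2_ge_1 n : (1 <= 2 ^ n)%nat.
Proof. apply Nat.le_succ_l, Nat.neq_0_lt_0, Nat.pow_nonzero. lia. Qed.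

Lemma pow_lt_pow_l x y n : 0 <= x < y -> (0 < n)%nat -> x ^ n < y ^ n.
Proof.
  intros Hxy Hn. destruct n as [|n]; [lia|]. clear Hn.
  induction n as [|n IH]; [simpl; lra|].
  rewrite <- (tech_pow_Rmult x), <- (tech_pow_Rmult y).
  assert (0 <= x ^ S n) by (apply pow_le; lra). nra.
Qed.

Lemma pow_le_1 x n : 0 <= x <= 1 -> x ^ n <= 1.
Proof. intros Hx. rewrite <- (pow1 n). apply pow_incr. exact Hx. Qed.

Section HalfPow.

Variable k : nat.
Hypothesis k_ge1 : (1 <= k)%nat.

Lemma half_pow_I01 x : I01 x -> I01 (half_pow k x).
Proof.
  unfold I01, half_pow. intros Hx. destruct k as [|j]; [lia|].
  rewrite <- tech_pow_Rmult.
  assert (Hj : 0 <= (x / 2) ^ j <= 1).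
  { split; [apply pow_le|apply pow_le_1]; lra. }
  nra.
Qed.

Lemma half_pow_deriv : is_deriv01 (half_pow k) (fun x => INR k * (x / 2) ^ (k - 1)).
Proof.
  apply is_deriv01_of_is_derive. intros x. unfold half_pow.
  auto_derive; [exact I|]. rewrite Nat.sub_1_r.
  (* [auto_derive] states the goal over [R_AbsRing]; retype it over [R] for [field] *)
  change (2 * (1 * / 2 * (INR k * (x / 2) ^ pred k)) = INR k * (x / 2) ^ pred k). field.
Qed.

Lemma half_pow_lt x y : 0 <= x < y -> half_pow k x < half_pow k y.
Proof.
  intros Hxy. unfold half_pow. apply Rmult_lt_compat_l; [lra|].
  apply pow_lt_pow_l; [lra|lia].
Qed.

Lemma half_pow_bound x : I01 x -> Rabs (half_pow k x) <= half_pow k 1.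
Proof.
  intros Hx. unfold I01 in Hx. unfold half_pow.
  rewrite Rabs_pos_eq by (apply Rmult_le_pos; [lra|apply pow_le; lra]).
  apply Rmult_le_compat_l; [lra|]. apply pow_incr. lra.
Qed.

Lemma half_pow_deriv_bound x : I01 x ->
  Rabs (INR k * (x / 2) ^ (k - 1)) <= INR k * (1 / 2) ^ (k - 1).
Proof.
  intros Hx. unfold I01 in Hx. pose proof (pos_INR k).
  rewrite Rabs_pos_eq by (apply Rmult_le_pos; [lra|apply pow_le; lra]).
  apply Rmult_le_compat_l; [lra|]. apply pow_incr. lra.
Qed.

Lemma half_pow_add_deriv_at_1 :
  half_pow k 1 + INR k * (1 / 2) ^ (k - 1) = 2 * (1 + INR k) * (1 / 2) ^ k.
Proof.
  unfold half_pow. destruct k as [|j]; [lia|].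
  replace (S j - 1)%nat with j by lia. rewrite <- tech_pow_Rmult. field.
Qed.

End HalfPow.

Lemma pow2_dominates m : exists N, forall n, (N <= n)%nat -> (m * n + n + 2 <= 2 ^ n)%nat.
Proof.
  assert (Hsq : forall n, (4 <= n)%nat -> (n * n <= 2 ^ n)%nat).
  { intros n Hn. induction Hn as [|n Hn IH]; [simpl; lia|].
    rewrite Nat.pow_succ_r'. nia. }
  exists (m + 4)%nat. intros n Hn. specialize (Hsq n ltac:(lia)). nia.
Qed.

Lemma doubly_exponential_decay eps : 0 < eps -> exists N, forall n, (N <= n)%nat ->
  2 * (1 + INR (2 ^ n)) * (1 / 2) ^ (2 ^ n) < eps ^ n.
Proof.
  intros Heps.
  destruct (pow_lt_1_zero (1 / 2) ltac:(rewrite Rabs_pos_eq; lra) eps Heps) as [m Hm].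
  specialize (Hm m (le_n m)). rewrite Rabs_pos_eq in Hm by (apply pow_le; lra).
  destruct (pow2_dominates m) as [N HN].
  exists (S N). intros n Hn.
  destruct (Nat.le_exists_sub _ _ (HN n ltac:(lia))) as [j [Hj _]].
  rewrite pow_INR, Hj, !pow_add, pow_mult. replace (INR 2) with 2 by (simpl; ring).
  set (q := (1 / 2) ^ m). set (h := (1 / 2) ^ n). set (t := (1 / 2) ^ j).
  assert (Hh : 2 ^ n * h = 1).
  { unfold h. rewrite <- Rpow_mult_distr. replace (2 * (1 / 2)) with 1 by field. apply pow1. }
  assert (Hh1 : 0 < h <= 1) by (unfold h; split; [apply pow_lt; lra|apply pow_le_1; lra]).
  assert (Ht1 : 0 < t <= 1) by (unfold t; split; [apply pow_lt; lra|apply pow_le_1; lra]).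
  assert (Hq : 0 < q ^ n) by (apply pow_lt; unfold q; apply pow_lt; lra).
  assert (Hqe : q ^ n < eps ^ n).
  { apply pow_lt_pow_l; [split; [unfold q; apply pow_le; lra|exact Hm]|lia]. }
  (* from [2^n = j + (m n + n + 2)]: [2^(-2^n) = 2^(-j) (2^(-m))^n 2^(-n) / 4] *)
  replace (2 * (1 + 2 ^ n) * (t * (q ^ n * h * (1 / 2) ^ 2)))
    with ((h + 2 ^ n * h) / 2 * t * q ^ n) by (simpl; field).
  rewrite Hh.
  assert (Hht : (h + 1) / 2 * t <= 1) by nra.
  nra.
Qed.

Lemma ph_I01 x : I01 x -> I01 (ph x).
Proof. unfold I01, ph. intros Hx. nra. Qed.

Lemma ph_deriv : is_deriv01 ph (fun x => x).
Proof.
  apply is_deriv01_of_is_derive. intros x. unfold ph.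
  auto_derive; [exact I|lra].
Qed.

Lemma unital_endo_comp_op_ph : unital_endo (comp_op ph).
Proof.
  apply (unital_endo_comp_op ph (fun x => x) ph_I01 ph_deriv).
  - apply cont01_of_continuity_pt, continuity_pt_id.
  - intros x Hx. unfold I01 in Hx. rewrite Rabs_pos_eq; lra.
Qed.

Lemma riesz_comp_op_ph : riesz_op (comp_op ph).
Proof.
  split; [apply unital_endo_comp_op_ph|].
  intros eps Heps. destruct (doubly_exponential_decay eps Heps) as [N HN].
  exists N. intros n Hn. exists eval0, (2 * (1 + INR (2 ^ n)) * (1 / 2) ^ (2 ^ n)).
  split; [exact compact_op_eval0|]. split; [exact (HN n Hn)|].
  rewrite op_pow_comp_op, iter_ph, <- (half_pow_add_deriv_at_1 _ (pow2_ge_1 n)).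
  apply (comp_op_sub_eval0_norm_le _ _ (half_pow_I01 _ (pow2_ge_1 n)) (half_pow_deriv _)).
  - apply half_pow_bound.
  - apply half_pow_deriv_bound.
Qed.

Definition bump (a : R) (k : nat) (y : R) : R :=
  (y - a) / (2 * (1 + INR k ^ 2 * (y - a) ^ 2)).

Definition dbump (a : R) (k : nat) (y : R) : R :=
  (1 - INR k ^ 2 * (y - a) ^ 2) / (2 * (1 + INR k ^ 2 * (y - a) ^ 2) ^ 2).

Lemma bump_denom_ge_1 a k y : 1 <= 1 + INR k ^ 2 * (y - a) ^ 2.
Proof.
  assert (0 <= INR k ^ 2 * (y - a) ^ 2) by (apply Rmult_le_pos; apply pow2_ge_0). lra.
Qed.

Lemma bump_deriv a k : is_deriv01 (bump a k) (dbump a k).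
Proof.
  apply is_deriv01_of_is_derive. intros y. unfold bump, dbump.
  pose proof (bump_denom_ge_1 a k y). auto_derive; [lra|field; lra].
Qed.

Lemma dbump_cont01 a k : cont01 (dbump a k).
Proof.
  apply cont01_of_continuity_pt. intros y.
  apply continuity_pt_filterlim, (ex_derive_continuous (V := R_NormedModule)).
  unfold dbump. pose proof (bump_denom_ge_1 a k y). auto_derive. nra.
Qed.

Lemma Rabs_div_le p q c : 0 < q -> Rabs p <= c * q -> Rabs (p / q) <= c.
Proof.
  intros Hq H. unfold Rdiv. rewrite Rabs_mult, Rabs_inv, (Rabs_pos_eq q) by lra.
  apply (Rmult_le_reg_r q); [exact Hq|]. rewrite Rmult_assoc, Rinv_l by lra. lra.
Qed.

Lemma dbump_le a k y : Rabs (dbump a k y) <= / (2 * (1 + INR k ^ 2 * (y - a) ^ 2)).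
Proof.
  unfold dbump. pose proof (bump_denom_ge_1 a k y). set (s := INR k ^ 2 * (y - a) ^ 2) in *.
  apply Rabs_div_le; [nra|].
  assert (0 <= s) by (unfold s; apply Rmult_le_pos; apply pow2_ge_0).
  assert (Rabs (1 - s) <= 1 + s) by (unfold Rabs; destruct Rcase_abs; lra).
  replace (/ (2 * (1 + s)) * (2 * (1 + s) ^ 2)) with (1 + s) by (field; lra). lra.
Qed.

Lemma bump_unit_ball a k : I01 a -> C1 (bump a k) /\ C1norm_le (bump a k) 1.
Proof.
  intros Ha. split; [exists (dbump a k); split; [apply bump_deriv|apply dbump_cont01]|].
  replace 1 with (1 / 2 + 1 / 2) by field.
  apply (C1norm_le_intro _ (dbump a k)); [apply bump_deriv| |].
  - intros x Hx. unfold bump. pose proof (bump_denom_ge_1 a k x). apply Rabs_div_le; [lra|].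
    assert (Rabs (x - a) <= 1) by (unfold I01 in *; unfold Rabs; destruct Rcase_abs; lra).
    replace (1 / 2 * (2 * (1 + INR k ^ 2 * (x - a) ^ 2))) with (1 + INR k ^ 2 * (x - a) ^ 2)
      by field.
    lra.
  - intros y _. eapply Rle_trans; [apply dbump_le|]. pose proof (bump_denom_ge_1 a k y).
    replace (1 / 2) with (/ 2) by field. apply Rinv_le_contravar; lra.
Qed.

Lemma dbump_center a k : dbump a k a = 1 / 2.
Proof. unfold dbump. replace (a - a) with 0 by ring. field. Qed.

Lemma dbump_cv0 a y : y <> a -> Un_cv (fun k => dbump a k y) 0.
Proof.
  intros Hya eps Heps. unfold R_dist.
  set (t := (y - a) ^ 2).
  assert (Ht : 0 < t) by (apply pow2_gt_0; lra).
  assert (Hc : 0 < 2 * eps * t) by (apply Rmult_lt_0_compat; lra).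
  destruct (INR_archimed (2 * eps * t) 1 Hc) as [N HN].
  exists N. intros k Hk. rewrite Rminus_0_r.
  eapply Rle_lt_trans; [apply dbump_le|]. fold t.
  apply le_INR in Hk.
  assert (Hk1 : 1 <= INR k).
  { destruct k as [|k]; [simpl in Hk; nra|]. rewrite S_INR. pose proof (pos_INR k). lra. }
  assert (Hkt : INR k * t <= INR k ^ 2 * t) by (apply Rmult_le_compat_r; simpl; nra).
  apply (Rmult_lt_reg_r (2 * (1 + INR k ^ 2 * t))); [nra|].
  rewrite Rinv_l by nra. nra.
Qed.

Lemma uniform_limit_not_cont01 (D : nat -> R -> R) (G : R -> R) d :
  d <> 0 -> (forall n, D n 1 = d) ->
  (forall y, 0 <= y < 1 -> Un_cv (fun n => D n y) 0) ->
  (forall eps, 0 < eps -> exists N, forall n, (N <= n)%nat ->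
     forall y, I01 y -> Rabs (D n y - G y) <= eps) ->
  ~ cont01 G.
Proof.
  intros Hd Hend Hptw Hunif HG.
  set (e := Rabs d / 4).
  assert (He : 0 < e) by (unfold e; pose proof (Rabs_pos_lt d Hd); lra).
  destruct (Hunif e He) as [N HN].
  destruct (HG 1 I01_1 e He) as [delta [Hdelta Hcont]].
  set (y0 := Rmax 0 (1 - delta / 2)).
  assert (Hy0 : 0 <= y0 < 1 /\ Rabs (y0 - 1) < delta).
  { unfold y0, Rmax. destruct Rle_dec; unfold Rabs; destruct Rcase_abs; lra. }
  destruct Hy0 as [Hy0 Hy0d].
  assert (Hy0' : I01 y0) by (unfold I01; lra).
  destruct (Hptw y0 Hy0 e He) as [M HM].
  set (n := max N M).
  specialize (HM n (Nat.le_max_r _ _)). unfold R_dist in HM. rewrite Rminus_0_r in HM.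
  assert (H1 := HN n (Nat.le_max_l _ _) 1 I01_1). rewrite Hend in H1.
  assert (H0 := HN n (Nat.le_max_l _ _) y0 Hy0').
  specialize (Hcont y0 Hy0' Hy0d).
  assert (Hd4 : Rabs d = 4 * e) by (unfold e; field).
  (* |d| <= |d - G 1| + |G 1 - G y0| + |G y0 - D n y0| + |D n y0| < 4 e = |d| *)
  clear - H1 H0 HM Hcont Hd4. unfold Rabs in *. repeat destruct Rcase_abs; lra.
Qed.

Lemma not_power_compact_comp_op_ph : ~ power_compact (comp_op ph).
Proof.
  intros [N [_ Hcompact]].
  rewrite op_pow_comp_op, iter_ph in Hcompact. destruct Hcompact as [_ Hcompact].
  set (k := (2 ^ N)%nat) in Hcompact.
  assert (Hk : (1 <= k)%nat) by apply pow2_ge_1.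
  set (a := half_pow k 1).
  destruct (Hcompact (bump a) (fun j => bump_unit_ball a j (half_pow_I01 k Hk 1 I01_1)))
    as [sigma [g [Hsigma [[g' [Hg Hg']] Hcv]]]].
  set (dP := fun x => INR k * (x / 2) ^ (k - 1)).
  apply (uniform_limit_not_cont01
           (fun n y => dbump a (sigma n) (half_pow k y) * dP y) g' (dP 1 / 2));
    [| | | |exact Hg'].
  - assert (0 < INR k) by (apply lt_0_INR; lia).
    assert (0 < (1 / 2) ^ (k - 1)) by (apply pow_lt; lra).
    apply Rgt_not_eq. unfold dP. apply Rdiv_lt_0_compat; [apply Rmult_lt_0_compat|]; lra.
  - intros n. cbv beta. fold a. rewrite dbump_center. field.
  - intros y Hy. replace 0 with (0 * dP y) by ring. apply CV_mult.
    + apply (Un_cv_subseq (fun j => dbump a j (half_pow k y)) 0 sigma Hsigma).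
      apply dbump_cv0, Rlt_not_eq, half_pow_lt; [exact Hk|lra].
    + intros eps Heps. exists O. intros j _. rewrite R_dist_eq. exact Heps.
  - intros eps Heps. destruct (Hcv eps Heps) as [M HM]. exists M. intros n Hn.
    refine (C1norm_le_deriv _ _ eps _ (HM n Hn)).
    apply is_deriv01_sub; [|exact Hg].
    apply (comp_op_deriv _ _ (half_pow_I01 k Hk) (half_pow_deriv k)), bump_deriv.
Qed.

Theorem corollary3p2 :
  (exists T : Op, unital_endo T /\ riesz_op T /\ ~ power_compact T) /\
  (let T := comp_op (fun x => x ^ 2 / 2) in
   unital_endo T /\ riesz_op T /\ ~ power_compact T).
Proof.
  assert (Hph : unital_endo (comp_op ph) /\ riesz_op (comp_op ph) /\ ~ power_compact (comp_op ph))
    by exact (conj unital_endo_comp_op_ph (conj riesz_comp_op_ph not_power_compact_comp_op_ph)).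
  split; [exists (comp_op ph)|]; exact Hph.
Qed.
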